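(* For every list (of any length $l$, in any initial order) and every request sequence $\sigma$ of length $n$, there is a deterministic online algorithm with advice that serves $\sigma$ at cost exactly $\mathrm{OPT}(\sigma)$ while reading at most $\mathrm{OPT}(\sigma)-n$ bits of advice, where costs are measured in the full cost model.
   Context: Static list update problem: a list contains $l$ distinct items in some initial order; a request sequence $\sigma=\langle\sigma_1,\dots,\sigma_n\rangle$ of items of the list must be served in order (online: when serving $\sigma_t$ the algorithm does not know $\sigma_{t+1},\dots$). Serving a request to the item currently at position $i$ (positions $1,\dots,l$ from the front) costs $i$ in the full cost model and $i-1$ in the partial cost model. Immediately after an access, the accessed item may be moved to any position closer to the front at no cost (free exchange); at any time, two adjacent items may be swapped at cost $1$ (paid exchange). For an algorithm $A$, $A(\sigma)$ denotes its total cost on $\sigma$, and $\mathrm{OPT}(\sigma)$ denotes the minimum total cost of any offline algorithm (knowing $\sigma$ in advance) serving $\sigma$ from the same initial list. Advice model: before serving, a benevolent oracle that knows the whole sequence $\sigma$ writes an infinite binary string (the advice tape); the online algorithm may read bits from the tape at any time. The number of advice bits read on $\sigma$ is the length of the shortest prefix of the tape containing all bits accessed. *)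

From mathcomp Require Import all_boot.
Set Implicit Arguments. Unset Strict Implicit. Unset Printing Implicit Defensive.

Section ListUpdate.
Variable T : eqType.

(* One time step of an algorithm serving a request x:
   - [swaps]: a sequence of paid exchanges, performed (in order) before the
     access; swap k exchanges the items at 0-based positions k and k+1 and
     costs 1 (an out-of-range swap costs 1 and does nothing);
   - the access to x, costing its 1-based position (full cost model);
   - [mvto]: free exchange: x is moved to 0-based position (minn mvto p),
     where p is its 0-based position at access time (i.e. only forward). *)
Record step := Step { swaps : seq nat; mvto : nat }.

Definition default_step : step := Step [::] 0.

Fixpoint swap_at (k : nat) (L : seq T) : seq T :=
  match k, L with
  | 0, x :: y :: r => y :: x :: r
  | k'.+1, x :: r => x :: swap_at k' r
  | _, _ => L
  end.

Definition move_to (j : nat) (x : T) (L : seq T) : seq T :=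
  let p := minn j (index x L) in
  let L' := rem x L in
  take p L' ++ x :: drop p L'.

Definition serve_step (a : step) (x : T) (L : seq T) : nat * seq T :=
  let L1 := foldl (fun L k => swap_at k L) L (swaps a) in
  (size (swaps a) + (index x L1).+1, move_to (mvto a) x L1).

Fixpoint total_cost (acts : seq step) (sigma : seq T) (L : seq T) : nat :=
  match sigma with
  | [::] => 0
  | x :: sigma' =>
      let a := head default_step acts in
      let: (c, L') := serve_step a x L in
      c + total_cost (behead acts) sigma' L'
  end.

Definition is_OPT (L sigma : seq T) (c : nat) : Prop :=
  (exists acts, total_cost acts sigma L = c) /\
  (forall acts, c <= total_cost acts sigma L).

(* Decision trees reading bits of the advice tape at arbitrary positions. *)
Inductive dtree (A : Type) : Type :=
  | Leaf of A
  | Ask of nat & (bool -> dtree A).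

Fixpoint eval_dtree (A : Type) (tape : nat -> bool) (d : dtree A)
  : A * seq nat :=
  match d with
  | Leaf a => (a, [::])
  | Ask p k => let: (a, ps) := eval_dtree tape (k (tape p)) in (a, p :: ps)
  end.

(* A deterministic online algorithm with advice: given the initial list and
   the requests seen so far (sigma_1 .. sigma_t, the last one being the
   current request), it decides (possibly after reading advice bits) the
   action for step t. *)
Definition online_alg := seq T -> seq T -> dtree step.

Definition alg_step (A : online_alg) (L sigma : seq T) (tape : nat -> bool)
  (t : nat) : step * seq nat :=
  eval_dtree tape (A L (take t.+1 sigma)).

Definition alg_actions (A : online_alg) (L sigma : seq T) tape : seq step :=
  [seq (alg_step A L sigma tape t).1 | t <- iota 0 (size sigma)].

Definition alg_cost (A : online_alg) (L sigma : seq T) tape : nat :=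
  total_cost (alg_actions A L sigma tape) sigma L.

(* number of advice bits read = length of the shortest tape prefix
   containing all accessed positions *)
Definition advice_read (A : online_alg) (L sigma : seq T) tape : nat :=
  \max_(p <- flatten [seq (alg_step A L sigma tape t).2
                     | t <- iota 0 (size sigma)]) p.+1.

End ListUpdate.

From mathcomp Require Import all_boot zify.
Set Implicit Arguments. Unset Strict Implicit. Unset Printing Implicit Defensive.

(* The advice describes an optimal offline algorithm in a normal form.
   - Cost of a trajectory.  For permutations M, N of a list, [inversions M N]
     counts the pairs they order differently.  A paid exchange changes one
     pair and moving the accessed item forward from p to q changes at most
     p - q pairs, so every algorithm pays at least the path cost of the lists
     L_1, ..., L_n it passes through: the sum over t of inversions between
     L_(t-1) and L_t plus the position of sigma_t in L_t.  Conversely an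
     insertion sort by paid exchanges realizes any such trajectory at exactly
     its path cost.
   - Normal form.  Each L_t may be replaced by a subset transfer of L_(t-1):
     carry behind sigma_t exactly the items in front of it that are behind it
     in L_t.  The new list lies between L_(t-1) and L_t for the inversion
     metric and sigma_t is not further back, so the path cost does not grow.
   - Advice.  A transfer is one bit per item in front of sigma_t; these bits
     are paid for by the inversions of the step plus the access cost, so an
     optimal normal trajectory is described with at most OPT - n bits.  The
     online algorithm replays the transfers read from the tape and serves each
     request by the insertion sort realizing its transfer. *)

Section Inversions.
Variable T : eqType.
Implicit Types (A B C : seq T) (x u v : T).

(* [inversions A B] counts the pairs (u, v) of items of A with u before v in A
   but v before u in B: for a permutation B of A, the number of adjacent
   transpositions needed to turn A into B (Kendall tau distance). *)
Definition inversions A B : nat :=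
  \sum_(u <- A) \sum_(v <- A) ((index u A < index v A) && (index v B < index u B)).

Lemma index_filter_lt (P : pred T) A u v : P u -> P v ->
  (index u (filter P A) < index v (filter P A)) = (index u A < index v A).
Proof.
move=> Pu Pv; elim: A => [|a A IH] //=.
case Pa: (P a) => /=; first by case: (a == u); case: (a == v).
have au : a != u by apply: contraFneq Pa => ->.
have av : a != v by apply: contraFneq Pa => ->.
by rewrite (negbTE au) (negbTE av) ltnS.
Qed.

Lemma index_lt_total A u v : u \in A -> v \in A -> u != v ->
  (index u A < index v A) || (index v A < index u A).
Proof.
move=> uA vA uv; case: ltngtP => // E; exfalso.
by move/eqP: uv; apply; rewrite -(nth_index u uA) E nth_index.
Qed.

Lemma map_index_iota A : uniq A -> [seq index u A | u <- A] = iota 0 (size A).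
Proof.
elim: A => [|a A IH] //= /andP[naA uA]; rewrite eqxx; congr (_ :: _).
rewrite -(addn0 1) iotaDl -IH // -map_comp; apply/eq_in_map => u uA' /=.
by rewrite ifN //; apply: contraNneq naA => ->.
Qed.

Lemma sum_iota_lt n k : \sum_(i <- iota 0 n) (i < k) = minn n k.
Proof.
elim: n => [|n IH]; first by rewrite big_nil min0n.
rewrite -addn1 iotaD big_cat /= big_cons big_nil IH add0n.
by case: (ltnP n k) => h; lia.
Qed.

Lemma count_before A x : uniq A -> x \in A ->
  \sum_(u <- A) (index u A < index x A) = index x A.
Proof.
move=> uA xA.
rewrite -(big_map (fun u => index u A) xpredT (fun i => (i < index x A) : nat)).
by rewrite map_index_iota // sum_iota_lt; rewrite -index_mem in xA; lia.
Qed.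

Lemma inversions_refl A : inversions A A = 0.
Proof. by rewrite /inversions big1 // => u _; rewrite big1 // => v _; case: ltngtP. Qed.

(* Triangle inequality: a pair inverted between A and C is inverted either
   between A and B or between B and C. *)
Lemma inversions_tri A B C : uniq A -> perm_eq A B -> perm_eq A C ->
  inversions A C <= inversions A B + inversions B C.
Proof.
move=> uA pAB pAC; have pBA : perm_eq B A by rewrite perm_sym.
rewrite /inversions [X in _ <= _ + X](perm_big A pBA) -big_split /=.
rewrite big_seq [X in _ <= X]big_seq; apply: leq_sum => u uA'.
rewrite [X in _ <= _ + X](perm_big A pBA) -big_split /=.
rewrite big_seq [X in _ <= X]big_seq; apply: leq_sum => v vA.
have uB : u \in B by rewrite -(perm_mem pAB).
have vB : v \in B by rewrite -(perm_mem pAB).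
case: (eqVneq u v) => [->|uv]; first by rewrite ltnn.
have := index_lt_total uB vB uv.
by case: (index u A < index v A); case: (index v C < index u C);
   case: (index v B < index u B); case: (index u B < index v B).
Qed.

Lemma inversions_cons A b B : uniq A -> perm_eq A (b :: B) ->
  inversions A (b :: B) = index b A + inversions (rem b A) B.
Proof.
move=> uA pA.
have bA : b \in A by rewrite (perm_mem pA) mem_head.
set A' := rem b A.
have pA' : perm_eq A (b :: A') := perm_to_rem bA.
have /andP[nbA' _] : uniq (b :: A') by rewrite -(perm_uniq pA').
have nb u : u \in A' -> (b == u) = false.
  by move=> uA1; apply: contraNF nbA' => /eqP ->.
have remf : A' = filter (predC1 b) A by rewrite /A' rem_filter.
rewrite /inversions (perm_big _ pA') big_cons big1; last first.
  by move=> v _; rewrite index_head ltn0 andbF.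
rewrite /= add0n; under eq_bigr do rewrite (perm_big _ pA') big_cons.
rewrite big_split /=; congr (_ + _).
- have cb := count_before uA bA.
  rewrite (perm_big _ pA') big_cons ltnn /= add0n in cb.
  rewrite -[RHS]cb; apply: eq_big_seq => u uA'' /=.
  by rewrite (nb u uA'') eqxx andbT.
- apply: eq_big_seq => u uA''; apply: eq_big_seq => v vA'' /=.
  by rewrite !nb // ltnS remf !index_filter_lt //= ; rewrite eq_sym nb.
Qed.

(* The pairwise form of [inversions_geodesic], for the positions of two
   distinct items in A, B and C. *)
Lemma geodesic_pair (a1 a2 b1 b2 c1 c2 : nat) :
  (a1 < a2 -> c1 < c2 -> b1 < b2) -> (a2 < a1 -> c2 < c1 -> b2 < b1) ->
  (a1 < a2) || (a2 < a1) -> (b1 < b2) || (b2 < b1) -> (c1 < c2) || (c2 < c1) ->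
  ((a1 < a2) && (b2 < b1)) + ((b1 < b2) && (c2 < c1)) <= (a1 < a2) && (c2 < c1).
Proof. by case: (ltngtP a1 a2); case: (ltngtP b1 b2); case: (ltngtP c1 c2). Qed.

Lemma inversions_geodesic A B C : uniq A -> perm_eq A B -> perm_eq A C ->
  (forall u v, u \in A -> v \in A -> index u A < index v A ->
     index u C < index v C -> index u B < index v B) ->
  inversions A B + inversions B C <= inversions A C.
Proof.
move=> uA pAB pAC between; have pBA : perm_eq B A by rewrite perm_sym.
rewrite /inversions [X in _ + X <= _](perm_big A pBA) -big_split /=.
rewrite big_seq [X in _ <= X]big_seq; apply: leq_sum => u uA'.
rewrite [X in _ + X <= _](perm_big A pBA) -big_split /=.
rewrite big_seq [X in _ <= X]big_seq; apply: leq_sum => v vA'.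
have [uB vB] : u \in B /\ v \in B by rewrite -!(perm_mem pAB).
have [uC vC] : u \in C /\ v \in C by rewrite -!(perm_mem pAC).
case: (eqVneq u v) => [->|uv]; first by rewrite !ltnn.
by apply: (geodesic_pair (between u v uA' vA') (between v u vA' uA'));
  apply: index_lt_total.
Qed.

Lemma index_le_inversions A B x : uniq A -> perm_eq A B -> x \in A ->
  index x A <= inversions A B + index x B.
Proof.
move=> uA pAB xA.
have xB : x \in B by rewrite -(perm_mem pAB).
have uB : uniq B by rewrite -(perm_uniq pAB).
have e1 := count_before uA xA; have e2 := count_before uB xB.
rewrite (perm_big _ (_ : perm_eq B A)) 1?perm_sym // in e2.
apply: (@leq_trans (\sum_(u <- A) ((index u A < index x A) && (index x B < index u B))
   + \sum_(u <- A) (index u B < index x B))).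
  rewrite -{1}e1 -big_split /= big_seq [X in _ <= X]big_seq; apply: leq_sum => u uA'.
  have uB' : u \in B by rewrite -(perm_mem pAB).
  case: (eqVneq u x) => [->|ux]; first by rewrite ltnn.
  have := index_lt_total uB' xB ux.
  by case: (index u A < index x A); case: (index x B < index u B);
    case: (index u B < index x B).
rewrite e2 leq_add2r /inversions big_seq [X in _ <= X]big_seq; apply: leq_sum => u _.
by rewrite (perm_big _ (perm_to_rem xA)) big_cons leq_addr.
Qed.

End Inversions.

Section PaidExchanges.
Variable T : eqType.
Implicit Types (A B X : seq T) (x : T) (s : seq nat).

Definition apply_swaps A s := foldl (fun (L : seq T) k => swap_at k L) A s.

Lemma apply_swaps_cat A s1 s2 :
  apply_swaps A (s1 ++ s2) = apply_swaps (apply_swaps A s1) s2.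
Proof. exact: foldl_cat. Qed.

Lemma perm_swap2 (a b : T) r : perm_eq (a :: b :: r) (b :: a :: r).
Proof. by rewrite -[a :: b :: r]/([:: a] ++ [:: b] ++ r) perm_catCA. Qed.

Lemma swap_at_perm k A : perm_eq A (swap_at k A).
Proof.
elim: k A => [|k IH] [|a r] //=; last by rewrite perm_cons IH.
by case: r => [|b r] //; exact: perm_swap2.
Qed.

Lemma apply_swaps_perm A s : perm_eq A (apply_swaps A s).
Proof.
elim: s A => [|k s IH] A /=; first exact: perm_refl.
exact: perm_trans (swap_at_perm k A) (IH _).
Qed.

Lemma apply_swaps_shift (P : seq T) s X :
  apply_swaps (P ++ X) (map (addn (size P)) s) = P ++ apply_swaps X s.
Proof.
have swap_cat k Y : swap_at (size P + k) (P ++ Y) = P ++ swap_at k Y.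
  by elim: P {X} => [|a P IH] //=; rewrite ?addSn IH.
by elim: s X => [|k s IH] X //=; rewrite swap_cat IH.
Qed.

Lemma bubble (x0 : T) i A : i < size A ->
  apply_swaps A (rev (iota 0 i)) = nth x0 A i :: take i A ++ drop i.+1 A.
Proof.
elim: i A => [|i IH] [|a A] //= h; first by rewrite drop0.
rewrite -(addn0 1) iotaDl rev_cons -cats1 -map_rev apply_swaps_cat.
by rewrite (apply_swaps_shift [:: a]) IH.
Qed.

Lemma inversions_swap_at k A : uniq A -> inversions A (swap_at k A) <= 1.
Proof.
elim: k A => [|k IH] [|a r] uA /=; try by rewrite inversions_refl.
- case: r uA => [|b r] uA; first by rewrite inversions_refl.
  rewrite inversions_cons //; last exact: perm_swap2.
  move: uA => /= /andP[]; rewrite inE negb_or => /andP[ab _] _.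
  by rewrite /= (negbTE ab) eqxx inversions_refl.
- rewrite inversions_cons //; last by rewrite perm_cons swap_at_perm.
  by rewrite index_head /= eqxx add0n IH //; case/andP: uA.
Qed.

Lemma inversions_apply_swaps A s : uniq A -> inversions A (apply_swaps A s) <= size s.
Proof.
elim: s A => [|k s IH] A uA /=; first by rewrite inversions_refl.
apply: leq_trans (inversions_tri uA (swap_at_perm k A) _) _.
  exact: perm_trans (swap_at_perm k A) (apply_swaps_perm _ s).
rewrite -add1n leq_add ?inversions_swap_at // IH //.
by rewrite -(perm_uniq (swap_at_perm k A)).
Qed.

(* Insertion-sort exchanges turning A into B: bubble the head of B to the
   front, then sort the rest of the list behind it. *)
Fixpoint sorting_swaps A B : seq nat :=
  match B with
  | [::] => [::]
  | b :: B' => rev (iota 0 (index b A)) ++ map (addn 1) (sorting_swaps (rem b A) B')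
  end.

Lemma sorting_swapsP A B : uniq A -> perm_eq A B ->
  apply_swaps A (sorting_swaps A B) = B /\ size (sorting_swaps A B) = inversions A B.
Proof.
elim: B A => [|b B IH] A uA pAB /=.
  have -> : A = [::] by apply/nilP; rewrite /nilp (perm_size pAB).
  by rewrite /inversions big_nil.
have bA : b \in A by rewrite (perm_mem pAB) mem_head.
have pA'B : perm_eq (rem b A) B.
  by rewrite -(perm_cons b); apply: perm_trans pAB; rewrite perm_sym perm_to_rem.
have [IH1 IH2] := IH _ (rem_uniq b uA) pA'B.
split; last by rewrite size_cat size_rev size_iota size_map IH2 inversions_cons.
rewrite apply_swaps_cat (bubble b) ?index_mem // nth_index // -remE.
by rewrite (apply_swaps_shift [:: b]) IH1.
Qed.

End PaidExchanges.

Section FreeExchange.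
Variable T : eqType.
Implicit Types (A : seq T) (x : T).

Lemma move_to_swaps j x A : x \in A ->
  let p := index x A in let q := minn j p in
  move_to j x A = apply_swaps A (map (addn q) (rev (iota 0 (p - q)))).
Proof.
move=> xA p q; have hqp : q <= p by rewrite geq_minr.
have hp : p < size A by rewrite index_mem.
have sq : size (take q A) = q by rewrite size_takel //; lia.
rewrite -{2}(cat_take_drop q A) -[X in map (addn X)]sq apply_swaps_shift (bubble x); last first.
  by rewrite size_drop; lia.
rewrite nth_drop subnKC // nth_index // drop_drop addSn subnK //.
rewrite /move_to -/p -/q remE -/p takel_cat ?size_takel ?take_takel //; try lia.
by rewrite -{1}(subnKC hqp) takeD -catA drop_size_cat.
Qed.

Lemma index_move_to j x A : uniq A -> x \in A ->
  index x (move_to j x A) = minn j (index x A).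
Proof.
move=> uA xA; have xR : x \notin rem x A by rewrite mem_rem_uniqF.
rewrite /move_to index_cat (negbTE (contra (@mem_take _ _ _ _) xR)) /=.
rewrite eqxx addn0 size_takel // size_rem //.
have := geq_minr j (index x A); rewrite -index_mem in xA; lia.
Qed.

End FreeExchange.

Section ListTrajectories.
Variable T : eqType.
Implicit Types (L M N : seq T) (x : T) (sig : seq T) (Ns : seq (seq T)).

(* Cost of one step from M to N serving x: the inversions between M and N,
   plus the access cost of x in N.  [path_cost M sig Ns] sums it along the
   list trajectory Ns, the t-th list being the one after serving sig_t. *)
Fixpoint path_cost M sig Ns : nat :=
  match sig, Ns with
  | x :: sig', N :: Ns' => inversions M N + (index x N).+1 + path_cost N sig' Ns'
  | _, _ => 0
  end.

(* A step costs at least its inversions plus the access cost of x after the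
   step: paid exchanges create at most one inversion each, and moving x
   forward from position p to q creates at most p - q inversions. *)
Lemma serve_step_lower a x L : uniq L -> x \in L ->
  let M := (serve_step a x L).2 in
  perm_eq L M /\ inversions L M + (index x M).+1 <= (serve_step a x L).1.
Proof.
case: a => sw j uL xL /=; rewrite -/(apply_swaps L sw).
set L1 := apply_swaps L sw; have pL1 : perm_eq L L1 := apply_swaps_perm L sw.
have xL1 : x \in L1 by rewrite -(perm_mem pL1).
have uL1 : uniq L1 by rewrite -(perm_uniq pL1).
have eM := move_to_swaps j xL1; have iM := index_move_to j uL1 xL1.
set M := move_to j x L1 in eM iM *.
have pLM : perm_eq L M by rewrite (perm_trans pL1) // eM apply_swaps_perm.
split=> //; rewrite /= iM.
have h1 : inversions L L1 <= size sw := inversions_apply_swaps sw uL.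
have h2 : inversions L1 M <= index x L1 - minn j (index x L1).
  rewrite [in X in inversions _ X]eM; apply: leq_trans (inversions_apply_swaps _ uL1) _.
  by rewrite size_map size_rev size_iota.
have := inversions_tri uL pL1 pLM; have := geq_minr j (index x L1); lia.
Qed.

Fixpoint trajectory (acts : seq step) sig L : seq (seq T) :=
  match sig with
  | [::] => [::]
  | x :: sig' => let L' := (serve_step (head default_step acts) x L).2 in
                 L' :: trajectory (behead acts) sig' L'
  end.

Lemma size_trajectory acts sig L : size (trajectory acts sig L) = size sig.
Proof. by elim: sig acts L => [|x sig IH] acts L //=; rewrite IH. Qed.

Lemma path_cost_trajectory acts sig L : uniq L -> all (mem L) sig ->
  path_cost L sig (trajectory acts sig L) <= total_cost acts sig L /\
  all (perm_eq L) (trajectory acts sig L).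
Proof.
elim: sig acts L => [|x sig IH] acts L uL //= /andP[xL hall].
have /= [pLM hM] := serve_step_lower (head default_step acts) uL xL.
set M := move_to _ x _ in pLM hM *.
have uM : uniq M by rewrite -(perm_uniq pLM).
have hall' : all (mem M) sig.
  by apply/allP => y /(allP hall); rewrite /= (perm_mem pLM).
have [IH1 IH2] := IH (behead acts) M uM hall'.
split; first exact: leq_add hM IH1.
rewrite pLM /=; apply/allP => N /(allP IH2); exact: perm_trans.
Qed.

Fixpoint realizing_actions M sig Ns : seq step :=
  match sig, Ns with
  | x :: sig', N :: Ns' => Step (sorting_swaps M N) (index x N) :: realizing_actions N sig' Ns'
  | _, _ => [::]
  end.

Lemma serve_step_sorting M N x : uniq M -> perm_eq M N -> x \in M ->
  serve_step (Step (sorting_swaps M N) (index x N)) x M =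
  (inversions M N + (index x N).+1, N).
Proof.
move=> uM pMN xM; have [eN sN] := sorting_swapsP uM pMN.
have xN : x \in N by rewrite -(perm_mem pMN).
rewrite /serve_step /= -/(apply_swaps M _) eN sN move_to_swaps //.
by rewrite minnn subnn.
Qed.

Lemma size_realizing_actions M sig Ns : size Ns = size sig ->
  size (realizing_actions M sig Ns) = size sig.
Proof. by elim: sig M Ns => [|x sig IH] M [|N Ns] //= [/IH ->]. Qed.

Lemma total_cost_realizing M sig Ns : uniq M -> all (mem M) sig ->
  size Ns = size sig -> all (perm_eq M) Ns ->
  total_cost (realizing_actions M sig Ns) sig M = path_cost M sig Ns.
Proof.
elim: sig M Ns => [|x sig IH] M [|N Ns] //= uM /andP[xM hall] [hs] /andP[pMN hperm].
have /= [-> ->] := serve_step_sorting uM pMN xM.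
congr (_ + _); apply: IH => //.
- by rewrite -(perm_uniq pMN).
- by apply/allP => y /(allP hall); rewrite /= (perm_mem pMN).
- by apply/allP => K /(allP hperm); apply: perm_trans; rewrite perm_sym.
Qed.

End ListTrajectories.

Section SubsetTransfer.
Variable T : eqType.
Implicit Types (A B F D M N : seq T) (x u v : T) (bs : seq bool).

Lemma index_cat_lt A B u v :
  (index u (A ++ B) < index v (A ++ B)) =
  if u \in A then (v \notin A) || (index u A < index v A)
  else (v \notin A) && (index u B < index v B).
Proof.
rewrite !index_cat; have hu := index_mem u A; have hv := index_mem v A.
by case: (u \in A) hu; case: (v \in A) hv => /= hv hu; lia.
Qed.

Lemma perm_mask_split (m : bitseq) (s : seq T) : size m = size s ->
  perm_eq (mask (map negb m) s ++ mask m s) s.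
Proof.
elim: s m => [|y s IH] [|[] m] //= [hm]; last by rewrite perm_cons IH.
by rewrite -cat1s perm_catCA /= perm_cons IH.
Qed.

(* Subset transfer: the items in front of x in M that are marked by bs are
   carried behind x, the others keep their place; all orders are preserved. *)
Definition transfer M x bs : seq T :=
  let p := index x M in let F := take p M in
  mask (map negb bs) F ++ x :: mask bs F ++ drop p.+1 M.

Definition transfer_bits M x N : seq bool :=
  [seq index x N < index y N | y <- take (index x M) M].

Lemma split_at_index M x : x \in M ->
  M = take (index x M) M ++ x :: drop (index x M).+1 M.
Proof.
by move=> xM; rewrite -{1}(cat_take_drop (index x M) M) (drop_nth x) ?index_mem ?nth_index.
Qed.

Lemma transfer_perm M x bs : x \in M -> size bs = index x M ->
  perm_eq M (transfer M x bs).
Proof.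
move=> xM hs; rewrite {1}(split_at_index xM) /transfer perm_sym -cat1s perm_catCA.
rewrite perm_sym -cat1s perm_catCA /= perm_cons catA perm_cat2r perm_sym.
by rewrite perm_mask_split // size_takel // ltnW // index_mem.
Qed.

Lemma size_transfer_bits M x N : x \in M -> size (transfer_bits M x N) = index x M.
Proof. by move=> xM; rewrite size_map size_takel // ltnW // index_mem. Qed.

Lemma transfer_order F D x (P : pred T) u v :
  uniq (F ++ x :: D) -> u \in F ++ x :: D -> v \in F ++ x :: D ->
  let S := filter (predC P) F ++ x :: filter P F ++ D in
  index u (F ++ x :: D) < index v (F ++ x :: D) ->
  [&& u \in F, P u & (v == x) || (v \in F) && ~~ P v] || (index u S < index v S).
Proof.
rewrite cat_uniq /= negb_or => /and4P[_ /andP[xF /hasPn FD] xD _].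
move=> uM vM; rewrite -[x :: D]cat1s -[x :: _ ++ D]cat1s (index_cat_lt F).
rewrite (index_cat_lt [:: x] D) (index_cat_lt (filter _ F)).
rewrite (index_cat_lt [:: x] (filter P F ++ D)) (index_cat_lt (filter P F)).
rewrite !mem_filter !inE /=.
have position y : y \in F ++ x :: D ->
    [\/ (y \in F) && (y != x), y = x | (y \notin F) && (y != x)].
  rewrite mem_cat inE => /or3P[yF|/eqP->|yD]; [constructor 1|by constructor 2|constructor 3].
  - by rewrite yF; apply: contraNneq xF => <-.
  - by rewrite (FD _ yD); apply: contraNneq xD => <-.
case/position: uM => [/andP[-> /negbTE ->]|->|/andP[/negbTE -> /negbTE ->]];
case/position: vM => [/andP[-> /negbTE ->]|->|/andP[/negbTE -> /negbTE ->]];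
rewrite ?eqxx ?(negbTE xF) ?andbF /=;
case Pu: (P u); case Pv: (P v); case Px: (P x) => //=;
rewrite ?index_filter_lt /= ?Pu ?Pv ?Px //.
Qed.

Lemma transfer_bitsE M N x : x \in M ->
  let P := fun y => index x N < index y N in let F := take (index x M) M in
  transfer M x (transfer_bits M x N) =
  filter (predC P) F ++ x :: filter P F ++ drop (index x M).+1 M.
Proof.
by move=> xM P F; rewrite /transfer /transfer_bits !filter_mask -map_comp.
Qed.

(* The transfer imitating N lies between M and N: the only pairs it reorders
   are pairs (u, v) with v <= x < u in N, i.e. pairs inverted by N. *)
Lemma transfer_bits_between M N x : uniq M -> x \in M -> perm_eq M N ->
  inversions M (transfer M x (transfer_bits M x N)) +
  inversions (transfer M x (transfer_bits M x N)) N <= inversions M N.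
Proof.
move=> uM xM pMN; set N0 := transfer M x _; have eN0 : N0 = _ := transfer_bitsE N xM.
have pN0 : perm_eq M N0 := transfer_perm xM (size_transfer_bits N xM).
move: eN0; set P := fun y => _; set F := take _ M; set D := drop _ M => eN0.
have eM : M = F ++ x :: D := split_at_index xM.
apply: inversions_geodesic => // u v uM' vM' huv hN.
have := @transfer_order F D x P u v; rewrite -eM eN0 => /(_ uM uM' vM' huv).
case/orP => // /and3P[_ Pu /orP[/eqP vx|/andP[_ Pv]]]; exfalso.
  by move: Pu hN; rewrite /P vx; lia.
by move: Pu Pv hN; rewrite /P; lia.
Qed.

(* ... and brings x at least as far forward as N: the items left in front of
   x are in front of x in N. *)
Lemma index_transfer_bits M N x : uniq M -> x \in M -> perm_eq M N ->
  index x (transfer M x (transfer_bits M x N)) <= index x N.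
Proof.
move=> uM xM pMN; rewrite transfer_bitsE //.
set P := fun y => _; set F := take _ M.
have eM : M = F ++ x :: drop (index x M).+1 M := split_at_index xM.
have xF : x \notin F by move: uM; rewrite eM cat_uniq /= negb_or => /and4P[_ /andP[]].
rewrite index_cat mem_filter (negbTE xF) andbF /= eqxx addn0.
have xN : x \in N by rewrite -(perm_mem pMN).
have hxN : index x N <= size N by rewrite ltnW // index_mem.
rewrite -[X in _ <= X](size_takel hxN).
apply: uniq_leq_size; first by apply: filter_uniq; move: uM; rewrite eM cat_uniq => /andP[].
move=> y; rewrite mem_filter => /andP[Py yF].
have yN : y \in N by rewrite -(perm_mem pMN) eM mem_cat yF.
have yx : y != x by apply: contraNneq xF => <-.
rewrite in_take // ltn_neqAle; move: Py; rewrite /= /P -leqNgt => ->; rewrite andbT.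
by apply: contra yx => /eqP/(congr1 (nth x N)); rewrite !nth_index // => ->.
Qed.

End SubsetTransfer.

Section TransferTrajectories.
Variable T : eqType.
Implicit Types (A B M N : seq T) (x : T) (sig : seq T) (Ns : seq (seq T))
  (bss : seq (seq bool)).

Fixpoint transfer_lists M sig bss : seq (seq T) :=
  match sig, bss with
  | x :: sig', bs :: bss' => let N := transfer M x bs in N :: transfer_lists N sig' bss'
  | _, _ => [::]
  end.

Fixpoint advice_fits M sig bss : bool :=
  match sig, bss with
  | x :: sig', bs :: bss' => (size bs == index x M) && advice_fits (transfer M x bs) sig' bss'
  | [::], [::] => true
  | _, _ => false
  end.

Lemma size_transfer_lists M sig bss : advice_fits M sig bss ->
  size (transfer_lists M sig bss) = size sig.
Proof.
by elim: sig M bss => [|x sig IH] M [|bs bss] //= /andP[_ /IH ->].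
Qed.

Lemma transfer_lists_perm M sig bss : all (mem M) sig -> advice_fits M sig bss ->
  all (perm_eq M) (transfer_lists M sig bss).
Proof.
elim: sig M bss => [|x sig IH] M [|bs bss] //= /andP[xM hall] /andP[/eqP hs fits].
have pMN := transfer_perm xM hs; rewrite pMN /=.
have hall' : all (mem (transfer M x bs)) sig.
  by apply/allP => y /(allP hall); rewrite /= (perm_mem pMN).
by apply/allP => K /(allP (IH _ _ hall' fits)); apply: perm_trans.
Qed.

Lemma path_cost_start sig Ns A B : uniq A -> perm_eq A B -> all (perm_eq A) Ns ->
  path_cost A sig Ns <= inversions A B + path_cost B sig Ns.
Proof.
case: sig Ns => [|x sig] [|N Ns] uA pAB //= /andP[pAN _].
have := inversions_tri uA pAB pAN; lia.
Qed.

Lemma transfer_normalize M sig Ns : uniq M -> all (mem M) sig ->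
  size Ns = size sig -> all (perm_eq M) Ns ->
  exists2 bss, advice_fits M sig bss &
    path_cost M sig (transfer_lists M sig bss) <= path_cost M sig Ns.
Proof.
elim: sig M Ns => [|x sig IH] M [|N Ns] //=; first by exists [::].
move=> uM /andP[xM hall] [hs] /andP[pMN hperm].
have geo := transfer_bits_between uM xM pMN.
have ix := index_transfer_bits uM xM pMN.
have hbs := size_transfer_bits N xM.
set N0 := transfer M x _ in geo ix.
have pN0 : perm_eq M N0 := transfer_perm xM hbs.
have uN0 : uniq N0 by rewrite -(perm_uniq pN0).
have pN0N : perm_eq N0 N by apply: perm_trans pMN; rewrite perm_sym.
have hall' : all (mem N0) sig.
  by apply/allP => y /(allP hall); rewrite /= (perm_mem pN0).
have hperm' : all (perm_eq N0) Ns.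
  by apply/allP => K /(allP hperm); apply: perm_trans; rewrite perm_sym.
have [bss fits c] := IH N0 Ns uN0 hall' hs hperm'.
exists (transfer_bits M x N :: bss); first by rewrite /= hbs eqxx.
have start := path_cost_start sig uN0 pN0N hperm'; rewrite /= -/N0.
by clear -geo ix c start; lia.
Qed.

(* The advice is short: the bits for a request are paid for either by the
   inversions of the step or by the access cost of the request. *)
Lemma advice_length M sig bss : uniq M -> all (mem M) sig -> advice_fits M sig bss ->
  size sig + sumn (map size bss) <= path_cost M sig (transfer_lists M sig bss).
Proof.
elim: sig M bss => [|x sig IH] M [|bs bss] //= uM /andP[xM hall] /andP[/eqP hs fits].
set N := transfer M x bs; have pMN : perm_eq M N := transfer_perm xM hs.
have uN : uniq N by rewrite -(perm_uniq pMN).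
have hall' : all (mem N) sig.
  by apply/allP => y /(allP hall); rewrite /= (perm_mem pMN).
have := IH N bss uN hall' fits; have := index_le_inversions uM pMN xM; lia.
Qed.

End TransferTrajectories.

Section AdviceAlgorithm.
Variable T : eqType.
Implicit Types (M N : seq T) (x : T) (sig : seq T) (bss : seq (seq bool))
  (tape : nat -> bool).

Fixpoint read_bits (k pos : nat) (cont : seq bool -> dtree step) : dtree step :=
  match k with
  | 0 => cont [::]
  | k'.+1 => Ask pos (fun b => read_bits k' pos.+1 (fun bs => cont (b :: bs)))
  end.

(* Replaying the requests seen so far from list M, reading the bits of the
   subset transfer of each request from the tape, starting at position pos;
   for the current request, output the step realizing its transfer. *)
Fixpoint transfer_tree M (pos : nat) (reqs : seq T) : dtree step :=
  match reqs with
  | [::] => Leaf default_step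
  | x :: r => read_bits (index x M) pos (fun bs =>
      let N := transfer M x bs in
      match r with
      | [::] => Leaf (Step (sorting_swaps M N) (index x N))
      | _ => transfer_tree N (pos + index x M) r
      end)
  end.

Definition transfer_alg : online_alg T := fun L reqs => transfer_tree L 0 reqs.

Lemma read_bitsE tape k pos cont :
  let bs := mkseq (fun i => tape (pos + i)) k in
  eval_dtree tape (read_bits k pos cont) =
  ((eval_dtree tape (cont bs)).1, iota pos k ++ (eval_dtree tape (cont bs)).2).
Proof.
elim: k pos cont => [|k IH] pos cont /=; first by case: eval_dtree.
rewrite IH /mkseq /= addn0 -(addn0 1) iotaDl -map_comp.
have -> : [seq tape (pos.+1 + i) | i <- iota 0 k] = [seq tape (pos + (1 + i)) | i <- iota 0 k].
  by apply: eq_map => i; rewrite addnA addn1.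
by [].
Qed.

Lemma mkseq_tape tape pos (bs rest : seq bool) :
  (forall i, tape (pos + i) = nth false (bs ++ rest) i) ->
  mkseq (fun i => tape (pos + i)) (size bs) = bs.
Proof.
move=> h; rewrite -[RHS](mkseq_nth false bs) /mkseq; apply/eq_in_map => i.
by rewrite mem_iota add0n => /andP[_ hi]; rewrite h nth_cat hi.
Qed.

Lemma transfer_treeE sig M bss pos tape : advice_fits M sig bss ->
  (forall i, tape (pos + i) = nth false (flatten bss) i) ->
  forall t, t < size sig ->
  eval_dtree tape (transfer_tree M pos (take t.+1 sig)) =
  (nth default_step (realizing_actions M sig (transfer_lists M sig bss)) t,
   iota pos (sumn (map size (take t.+1 bss)))).
Proof.
elim: sig M bss pos => [|x sig IH] M [|bs bss] pos //= /andP[/eqP hs fits] htape t ht.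
rewrite read_bitsE -hs (mkseq_tape htape).
case: t ht => [|t] ht /=; first by rewrite take0 /= take0 /= addn0 cats0.
case: sig IH fits ht => [|y sig] IH fits ht //.
rewrite -[take t.+1 (y :: sig)]/(y :: take t sig) /= -/(take t.+1 (y :: sig)).
rewrite hs (IH _ bss) // ?iotaD // => i.
by rewrite -addnA -hs htape nth_cat ltnNge leq_addr /= addKn.
Qed.

Lemma transfer_algP L sig bss : advice_fits L sig bss ->
  let tape := nth false (flatten bss) in
  alg_actions transfer_alg L sig tape = realizing_actions L sig (transfer_lists L sig bss) /\
  advice_read transfer_alg L sig tape <= sumn (map size bss).
Proof.
move=> fits tape; have hE := transfer_treeE fits (pos := 0) (tape := tape) (fun i => erefl).
split.
  have hs : size (realizing_actions L sig (transfer_lists L sig bss)) = size sig.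
    exact: size_realizing_actions (size_transfer_lists fits).
  rewrite /alg_actions -[RHS](mkseq_nth default_step) hs /mkseq.
  apply/eq_in_map => t; rewrite mem_iota add0n => /andP[_ ht].
  by rewrite /alg_step /transfer_alg hE.
apply/bigmax_leqP_seq => p /flattenP[ps /mapP[t]] + -> hp _.
rewrite mem_iota add0n => /andP[_ ht]; move: hp.
rewrite /alg_step /transfer_alg hE // mem_iota add0n => /andP[_ /leq_trans]; apply.
by rewrite -{2}(cat_take_drop t.+1 bss) map_cat sumn_cat leq_addr.
Qed.

End AdviceAlgorithm.

(* Take an optimal action sequence, normalize its trajectory into subset
   transfers, and give the algorithm their bits as advice. *)
Theorem theorem1 :
  forall T : eqType, exists A : online_alg T,
    forall (L sigma : seq T) (opt : nat),
      uniq L -> all (fun x => x \in L) sigma ->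
      is_OPT L sigma opt ->
      exists tape : nat -> bool,
        alg_cost A L sigma tape = opt /\
        advice_read A L sigma tape <= opt - size sigma.
Proof.
move=> T; exists (@transfer_alg T) => L sig opt uL hall [[acts e_opt] opt_min].
have [lower hperm] := path_cost_trajectory acts uL hall.
have [bss fits normal] :=
  transfer_normalize uL hall (size_trajectory acts sig L) hperm.
have [alg_acts alg_read] := transfer_algP fits.
exists (nth false (flatten bss)).
have alg_costE : alg_cost (@transfer_alg T) L sig (nth false (flatten bss)) =
                 path_cost L sig (transfer_lists L sig bss).
  rewrite /alg_cost alg_acts total_cost_realizing //.
    exact: size_transfer_lists.
  exact: transfer_lists_perm.
have cost_opt : path_cost L sig (transfer_lists L sig bss) = opt.
  apply/eqP; rewrite eqn_leq -alg_costE opt_min andbT alg_costE -e_opt.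
  exact: leq_trans normal lower.
split; first by rewrite alg_costE.
have := advice_length uL hall fits; rewrite cost_opt; lia.
Qed.
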